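(* Let $G=\bigoplus_{n=2}^\infty\mathbb Z/n$. There is a proper, left-invariant metric $d_G$ on $G$ such that $\operatorname{l\text{-}asdim}(G,d_G)>0=\operatorname{asdim}(G,d_G)$.
   Context: For a metric space $X$: $\operatorname{asdim}(X)\le n$ iff for every $r>0$ there are $D<\infty$ and families $\mathcal U_1,\dots,\mathcal U_{n+1}$ of subsets covering $X$, each $r$-disjoint (points in different members of the same family at distance $\ge r$), with members of diameter $\le D$. $\operatorname{l\text{-}asdim}(X)\le n$ (linearly controlled asymptotic dimension) iff there are $c>0$ and an unbounded set $U\subset\mathbb R_+$ such that for every $r\in U$ there are families $\mathcal U_1,\dots,\mathcal U_{n+1}$ covering $X$, each $r$-disjoint, with members of diameter $\le cr$. A metric is proper if bounded sets are finite (closed balls are compact). *)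

From Stdlib Require Import Reals Lra Lia Arith.
Open Scope R_scope.

(** The group G = ⊕_{n>=2} Z/n.  Component [k] (k : nat) is the factor
    Z/(k+2).  An element is a finitely supported sequence with
    [gval g k < k + 2]. *)
Record G : Type := mkG {
  gval : nat -> nat ;
  gbound : forall k, (gval k < k + 2)%nat ;
  gfin : exists N, forall k, (N <= k)%nat -> gval k = 0%nat }.

Lemma gadd_bound (x y : G) k :
  (((gval x k + gval y k) mod (k + 2)) < k + 2)%nat.
Proof. apply Nat.mod_upper_bound; lia. Qed.

Lemma gadd_fin (x y : G) : exists N, forall k, (N <= k)%nat ->
  ((gval x k + gval y k) mod (k + 2))%nat = 0%nat.
Proof.
  destruct (gfin x) as [N1 H1]; destruct (gfin y) as [N2 H2].
  exists (Nat.max N1 N2); intros k Hk.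
  rewrite H1, H2 by lia. simpl. apply Nat.Div0.mod_0_l.
Qed.

Definition gadd (x y : G) : G :=
  mkG (fun k => ((gval x k + gval y k) mod (k + 2))%nat)
      (gadd_bound x y) (gadd_fin x y).

Definition is_metric {X : Type} (d : X -> X -> R) : Prop :=
  (forall x y, 0 <= d x y) /\
  (forall x y, d x y = 0 <-> x = y) /\
  (forall x y, d x y = d y x) /\
  (forall x y z, d x z <= d x y + d y z).

(** Proper: bounded sets are finite; equivalently every closed ball is a
    finite set (listed by some finite list). *)
Definition proper_metric {X : Type} (d : X -> X -> R) : Prop :=
  forall (x : X) (r : R), exists l : list X,
    forall y, d x y <= r -> List.In y l.

Definition left_invariant (d : G -> G -> R) : Prop :=
  forall g x y, d (gadd g x) (gadd g y) = d x y.

Definition r_disjoint {X : Type} (d : X -> X -> R) (r : R)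
  (F : (X -> Prop) -> Prop) : Prop :=
  forall U V x y, F U -> F V -> U <> V -> U x -> V y -> r <= d x y.

Definition diam_le {X : Type} (d : X -> X -> R) (D : R)
  (F : (X -> Prop) -> Prop) : Prop :=
  forall U x y, F U -> U x -> U y -> d x y <= D.

(** The families U_1, ..., U_{n+1} are indexed by i < n+1. *)
Definition covers {X : Type} (n : nat)
  (F : nat -> (X -> Prop) -> Prop) : Prop :=
  forall x, exists i U, (i < n + 1)%nat /\ F i U /\ U x.

Definition asdim_le {X : Type} (d : X -> X -> R) (n : nat) : Prop :=
  forall r, 0 < r -> exists (D : R) (F : nat -> (X -> Prop) -> Prop),
    covers n F /\
    forall i, (i < n + 1)%nat -> r_disjoint d r (F i) /\ diam_le d D (F i).

Definition l_asdim_le {X : Type} (d : X -> X -> R) (n : nat) : Prop :=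
  exists (c : R) (Uset : R -> Prop),
    0 < c /\
    (forall r, Uset r -> 0 <= r) /\
    (forall M, exists r, Uset r /\ M < r) /\
    forall r, Uset r -> exists F : nat -> (X -> Prop) -> Prop,
      covers n F /\
      forall i, (i < n + 1)%nat -> r_disjoint d r (F i) /\ diam_le d (c * r) (F i).

From Stdlib Require Import Reals Lra Lia Arith List ZArith.
From Stdlib Require Import Classical ClassicalEpsilon FunctionalExtensionality
  PropExtensionality ProofIrrelevance.
Open Scope R_scope.

(* Weight the factor Z/(k+2) by k+1: d(x,y) = sum_k (k+1) * cycdist_(k+2)(x_k, y_k).
   Elements differing in some coordinate k >= K are at distance > K, so the cosets
   of the finite subgroup sum_(k<K) Z/(k+2) form a uniformly bounded r-disjoint
   cover for r <= K, and asdim = 0.  But the factor Z/(k+2) is a cycle of k+2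
   points whose consecutive points are at distance k+1: for r slightly above k+1
   an r-disjoint family must swallow the whole cycle, of diameter about r^2/2,
   which no bound c*r controls. *)

(* [a - b + (b - a)] is |a - b| in truncated nat subtraction. *)
Definition cycdist (n a b : nat) : nat :=
  Nat.min (a - b + (b - a)) (n - (a - b + (b - a))).

Lemma cycdist_diag n a : cycdist n a a = 0%nat.
Proof. unfold cycdist; lia. Qed.

Lemma cycdist_pos n a b : (a < n)%nat -> (b < n)%nat -> a <> b -> (1 <= cycdist n a b)%nat.
Proof. unfold cycdist; lia. Qed.

Lemma cycdist_sym n a b : cycdist n a b = cycdist n b a.
Proof. unfold cycdist; lia. Qed.

Lemma cycdist_triangle n a b c : (a < n)%nat -> (b < n)%nat -> (c < n)%nat ->
  (cycdist n a c <= cycdist n a b + cycdist n b c)%nat.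
Proof. unfold cycdist; lia. Qed.

Lemma cycdist_le n a b : (cycdist n a b <= n)%nat.
Proof. unfold cycdist; lia. Qed.

Lemma cycdist_succ n j : (S j < n)%nat -> cycdist n j (S j) = 1%nat.
Proof. unfold cycdist; lia. Qed.

Lemma cycdist_half n : cycdist n 0 (n / 2) = (n / 2)%nat.
Proof.
  pose proof (Nat.div_mod n 2 ltac:(lia)); pose proof (Nat.mod_upper_bound n 2 ltac:(lia)).
  unfold cycdist; lia.
Qed.

Lemma mod_add_lt_cases n g a : (g < n)%nat -> (a < n)%nat ->
  ((g + a) mod n = g + a /\ g + a < n \/ (g + a) mod n = g + a - n /\ n <= g + a)%nat.
Proof.
  intros Hg Ha; destruct (Nat.lt_ge_cases (g + a) n).
  - left; rewrite Nat.mod_small; lia.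
  - right; split; [|lia].
    replace (g + a)%nat with (g + a - n + 1 * n)%nat at 1 by lia.
    rewrite Nat.Div0.mod_add; apply Nat.mod_small; lia.
Qed.

Lemma cycdist_translate n g a b : (g < n)%nat -> (a < n)%nat -> (b < n)%nat ->
  cycdist n ((g + a) mod n) ((g + b) mod n) = cycdist n a b.
Proof.
  intros Hg Ha Hb.
  destruct (mod_add_lt_cases n g a Hg Ha) as [[-> ?]|[-> ?]];
  destruct (mod_add_lt_cases n g b Hg Hb) as [[-> ?]|[-> ?]]; unfold cycdist; lia.
Qed.

Lemma sum_f_R0_ge_term f N k : (forall i, 0 <= f i) -> (k <= N)%nat -> f k <= sum_f_R0 f N.
Proof.
  intros Hf; induction N as [|N IH]; intros Hk.
  - replace k with 0%nat by lia; simpl; lra.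
  - rewrite tech5; pose proof (cond_pos_sum f N Hf); pose proof (Hf (S N)).
    destruct (Nat.eq_dec k (S N)) as [->|]; [lra|].
    pose proof (IH ltac:(lia)); lra.
Qed.

Lemma sum_f_R0_stable f N M : (forall k, (N < k)%nat -> f k = 0) -> (N <= M)%nat ->
  sum_f_R0 f M = sum_f_R0 f N.
Proof.
  intros Hf; induction M as [|M IH]; intros HNM.
  - replace N with 0%nat by lia; reflexivity.
  - destruct (Nat.eq_dec N (S M)) as [->|]; [reflexivity|].
    rewrite tech5, IH, Hf by lia; lra.
Qed.

Lemma sum_f_R0_last f N : (forall k, (k < N)%nat -> f k = 0) -> sum_f_R0 f N = f N.
Proof.
  destruct N as [|N]; intros Hf; simpl; [reflexivity|].
  rewrite sum_eq_R0 by (intros; apply Hf; lia); lra.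
Qed.

Lemma G_ext (x y : G) : (forall k, gval x k = gval y k) -> x = y.
Proof.
  destruct x as [fx bx nx], y as [fy byy ny]; simpl; intro H.
  assert (fx = fy) by (apply functional_extensionality; exact H); subst fy.
  f_equal; apply proof_irrelevance.
Qed.

Definition supp_bound (x : G) : nat := proj1_sig (constructive_indefinite_description _ (gfin x)).

Lemma gval_supp_bound x k : (supp_bound x <= k)%nat -> gval x k = 0%nat.
Proof.
  unfold supp_bound; destruct (constructive_indefinite_description _ _) as [N HN]; auto.
Qed.

Definition gap (x y : G) (k : nat) : R := (INR k + 1) * INR (cycdist (k + 2) (gval x k) (gval y k)).

Definition dG (x y : G) : R := sum_f_R0 (gap x y) (Nat.max (supp_bound x) (supp_bound y)).

Lemma gap_nonneg x y k : 0 <= gap x y k.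
Proof. unfold gap; pose proof (pos_INR k); pose proof (pos_INR (cycdist (k + 2) (gval x k) (gval y k))); nra. Qed.

Lemma gap_eq0 x y k : gval x k = gval y k -> gap x y k = 0.
Proof. intros H; unfold gap; rewrite H, cycdist_diag; simpl; lra. Qed.

Lemma gap_ge_weight x y k : gval x k <> gval y k -> INR k + 1 <= gap x y k.
Proof.
  intros H; unfold gap.
  pose proof (le_INR _ _ (cycdist_pos _ _ _ (gbound x k) (gbound y k) H)).
  pose proof (pos_INR k); simpl in *; nra.
Qed.

Lemma dG_eq_sum x y N : (forall k, (N < k)%nat -> gval x k = gval y k) ->
  dG x y = sum_f_R0 (gap x y) N.
Proof.
  intros H; unfold dG; set (M := Nat.max (supp_bound x) (supp_bound y)).
  rewrite <- (sum_f_R0_stable (gap x y) M (Nat.max N M)),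
          <- (sum_f_R0_stable (gap x y) N (Nat.max N M)); try lia.
  - reflexivity.
  - intros; apply gap_eq0; auto.
  - intros; apply gap_eq0; rewrite !gval_supp_bound; unfold M in *; lia.
Qed.

Lemma dG_ge_weight x y k : gval x k <> gval y k -> INR k + 1 <= dG x y.
Proof.
  intros H; eapply Rle_trans; [apply gap_ge_weight, H|].
  rewrite (dG_eq_sum x y (Nat.max k (Nat.max (supp_bound x) (supp_bound y)))).
  - apply sum_f_R0_ge_term; [apply gap_nonneg | lia].
  - intros; rewrite !gval_supp_bound; lia.
Qed.

Lemma dG_single x y k : (forall i, i <> k -> gval x i = gval y i) -> dG x y = gap x y k.
Proof.
  intros H; rewrite (dG_eq_sum x y k) by (intros; apply H; lia).
  apply sum_f_R0_last; intros; apply gap_eq0, H; lia.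
Qed.

Lemma dG_metric : is_metric dG.
Proof.
  split; [|split; [|split]].
  - intros; apply cond_pos_sum, gap_nonneg.
  - intros x y; split.
    + intros H; apply G_ext; intros k.
      destruct (Nat.eq_dec (gval x k) (gval y k)) as [|Hne]; [assumption|].
      pose proof (dG_ge_weight x y k Hne); pose proof (pos_INR k); lra.
    + intros ->; apply sum_eq_R0; intros; apply gap_eq0; reflexivity.
  - intros x y; unfold dG; rewrite Nat.max_comm; apply sum_eq.
    intros; unfold gap; rewrite cycdist_sym; reflexivity.
  - intros x y z; set (N := Nat.max (supp_bound x) (Nat.max (supp_bound y) (supp_bound z))).
    rewrite (dG_eq_sum x z N), (dG_eq_sum x y N), (dG_eq_sum y z N), <- plus_sum;
      try (intros; rewrite !gval_supp_bound; unfold N in *; lia).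
    apply sum_Rle; intros k _; unfold gap.
    pose proof (le_INR _ _ (cycdist_triangle (k + 2) _ _ _ (gbound x k) (gbound y k) (gbound z k))).
    rewrite plus_INR in *; pose proof (pos_INR k); nra.
Qed.

Lemma dG_left_invariant : left_invariant dG.
Proof.
  intros g x y; set (N := Nat.max (supp_bound g) (Nat.max (supp_bound x) (supp_bound y))).
  rewrite (dG_eq_sum x y N), (dG_eq_sum (gadd g x) (gadd g y) N);
    try (intros; simpl; rewrite !gval_supp_bound; unfold N in *; lia).
  apply sum_eq; intros k _; unfold gap; simpl.
  rewrite cycdist_translate; auto; apply gbound.
Qed.

Lemma zero_bound k : (0 < k + 2)%nat.
Proof. lia. Qed.

Lemma zero_fin : exists N, forall k : nat, (N <= k)%nat -> 0%nat = 0%nat.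
Proof. exists 0%nat; reflexivity. Qed.

Definition zeroG : G := mkG (fun _ => 0%nat) zero_bound zero_fin.

Definition gset_fun (g : G) (K j i : nat) : nat :=
  if Nat.eqb i K then (j mod (K + 2))%nat else gval g i.

Lemma gset_bound g K j i : (gset_fun g K j i < i + 2)%nat.
Proof.
  unfold gset_fun; destruct (Nat.eqb_spec i K) as [->|]; [apply Nat.mod_upper_bound; lia | apply gbound].
Qed.

Lemma gset_fin g K j : exists N, forall i, (N <= i)%nat -> gset_fun g K j i = 0%nat.
Proof.
  exists (Nat.max (supp_bound g) (S K)); intros i Hi; unfold gset_fun.
  destruct (Nat.eqb_spec i K); [lia | apply gval_supp_bound; lia].
Qed.

Definition gset (g : G) (K j : nat) : G := mkG (gset_fun g K j) (gset_bound g K j) (gset_fin g K j).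

Fixpoint supported_below (K : nat) : list G :=
  match K with
  | O => zeroG :: nil
  | S K => flat_map (fun g => map (gset g K) (seq 0 (K + 2))) (supported_below K)
  end.

Lemma In_supported_below K y : (forall k, (K <= k)%nat -> gval y k = 0%nat) -> In y (supported_below K).
Proof.
  revert y; induction K as [|K IH]; intros y Hy; simpl.
  - left; apply G_ext; intros k; simpl; rewrite Hy; lia.
  - apply in_flat_map; exists (gset y K 0); split.
    + apply IH; intros k Hk; simpl; unfold gset_fun.
      destruct (Nat.eqb_spec k K); [apply Nat.Div0.mod_0_l | apply Hy; lia].
    + apply in_map_iff; exists (gval y K); split.
      * apply G_ext; intros i; simpl; unfold gset_fun.
        destruct (Nat.eqb_spec i K) as [->|]; [apply Nat.mod_small, gbound|].
        cbn; unfold gset_fun; destruct (Nat.eqb_spec i K); [lia | reflexivity].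
      * apply in_seq; pose proof (gbound y K); lia.
Qed.

Lemma dG_proper : proper_metric dG.
Proof.
  intros x r; destruct (INR_unbounded r) as [K HK].
  exists (supported_below (Nat.max (supp_bound x) K)); intros y Hy.
  apply In_supported_below; intros k Hk.
  destruct (Nat.eq_dec (gval y k) 0) as [|Hne]; [assumption|].
  assert (gval x k <> gval y k) by (rewrite gval_supp_bound; lia).
  pose proof (dG_ge_weight x y k ltac:(assumption)); pose proof (le_INR K k ltac:(lia)); lra.
Qed.

Definition coset (K : nat) (a : G) : G -> Prop :=
  fun z => forall k, (K <= k)%nat -> gval z k = gval a k.

Lemma coset_eq K a b : (forall k, (K <= k)%nat -> gval a k = gval b k) -> coset K a = coset K b.
Proof.
  intros Hab; apply functional_extensionality; intros z; apply propositional_extensionality.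
  unfold coset; split; intros Hz k Hk; rewrite Hz by exact Hk.
  - apply Hab, Hk.
  - symmetry; apply Hab, Hk.
Qed.

Lemma dG_asdim0 : asdim_le dG 0.
Proof.
  intros r Hr; destruct (INR_unbounded r) as [K HK].
  exists (sum_f_R0 (fun k => (INR k + 1) * (INR k + 2)) K),
         (fun _ U => exists a, U = coset K a).
  split.
  - intros x; exists 0%nat, (coset K x).
    split; [lia | split; [now exists x | intros k _; reflexivity]].
  - intros i _; split.
    + intros U V x y [a ->] [b ->] HUV Hx Hy.
      destruct (classic (forall k, (K <= k)%nat -> gval x k = gval y k)) as [Hxy|Hxy].
      * exfalso; apply HUV, coset_eq; intros k Hk.
        rewrite <- Hx, <- Hy by exact Hk; auto.
      * apply not_all_ex_not in Hxy as [k Hk].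
        apply imply_to_and in Hk as [HKk Hne].
        pose proof (dG_ge_weight x y k Hne); pose proof (le_INR K k HKk); lra.
    + intros U x y [a ->] Hx Hy.
      rewrite (dG_eq_sum x y K) by (intros; rewrite Hx, Hy by lia; reflexivity).
      apply sum_Rle; intros k _; unfold gap.
      pose proof (le_INR _ _ (cycdist_le (k + 2) (gval x k) (gval y k))).
      rewrite plus_INR in *; simpl in *; pose proof (pos_INR k); nra.
Qed.

Lemma nat_ceiling r : 0 <= r -> exists n : nat, r < INR n <= r + 1.
Proof.
  intros Hr; destruct (archimed r) as [Hgt Hle].
  assert (Hpos : (0 <= up r)%Z) by (apply le_IZR; lra).
  exists (Z.to_nat (up r)); rewrite INR_IZR_INZ, Z2Nat.id by exact Hpos; lra.
Qed.

Lemma r_disjoint_chain {X : Type} (d : X -> X -> R) r F (p : nat -> X) m U :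
  r_disjoint d r F -> (forall x, exists V, F V /\ V x) ->
  (forall j, (j < m)%nat -> d (p j) (p (S j)) < r) ->
  F U -> U (p 0%nat) -> forall j, (j <= m)%nat -> U (p j).
Proof.
  intros Hdisj Hcov Hstep HU Hp0; induction j as [|j IH]; intros Hj; [exact Hp0|].
  destruct (Hcov (p (S j))) as [V [HV HVp]].
  destruct (classic (U = V)) as [->|HUV]; [exact HVp|].
  pose proof (Hdisj U V _ _ HU HV HUV (IH ltac:(lia)) HVp); pose proof (Hstep j ltac:(lia)); lra.
Qed.

Definition axis (k j : nat) : G := gset zeroG k j.

Lemma dG_axis k a b : (a < k + 2)%nat -> (b < k + 2)%nat ->
  dG (axis k a) (axis k b) = (INR k + 1) * INR (cycdist (k + 2) a b).
Proof.
  intros Ha Hb; rewrite (dG_single _ _ k).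
  - unfold gap; simpl; unfold gset_fun; rewrite Nat.eqb_refl, !Nat.mod_small by lia; reflexivity.
  - intros i Hi; simpl; unfold gset_fun; destruct (Nat.eqb_spec i k); [lia | reflexivity].
Qed.

Lemma dG_not_l_asdim0 : ~ l_asdim_le dG 0.
Proof.
  intros [c [Us [Hc [_ [Hunb HF]]]]].
  destruct (Hunb (4 * c + 8)) as [r [Hr Hlarge]].
  destruct (HF r Hr) as [F [Hcov HF0]]; destruct (HF0 0%nat ltac:(lia)) as [Hdisj Hdiam].
  destruct (nat_ceiling r ltac:(lra)) as [n [Hrn Hnr]].
  assert (Hn9 : (8 < n)%nat) by (apply INR_lt; simpl; lra).
  (* Z/(k+2) with k + 1 = n - 2 < r: steps of length k + 1 < r, diameter about r^2/2. *)
  set (k := (n - 3)%nat); set (m := ((k + 2) / 2)%nat).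
  assert (Hk : INR k = INR n - 3) by (unfold k; rewrite minus_INR by lia; simpl; lra).
  assert (Hm : (k + 1 <= 2 * m /\ m < k + 2)%nat).
  { pose proof (Nat.div_mod (k + 2) 2 ltac:(lia)); pose proof (Nat.mod_upper_bound (k + 2) 2 ltac:(lia)).
    unfold m; lia. }
  assert (Hcov0 : forall x, exists V, F 0%nat V /\ V x).
  { intros x; destruct (Hcov x) as [i [V [Hi HV]]]; replace i with 0%nat in HV by lia; now exists V. }
  destruct (Hcov0 (axis k 0)) as [U [HU HU0]].
  assert (HUm : U (axis k m)).
  { apply (r_disjoint_chain dG r (F 0%nat) (axis k) m U Hdisj Hcov0); auto.
    intros j Hj; rewrite dG_axis, cycdist_succ by lia; simpl; lra. }
  pose proof (Hdiam U _ _ HU HU0 HUm) as Hd.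
  rewrite dG_axis, cycdist_half in Hd by lia; fold m in Hd.
  pose proof (le_INR _ _ (proj1 Hm)) as Hm2; rewrite plus_INR, mult_INR in Hm2; simpl in Hm2.
  assert (Hsq : (INR k + 1) * (INR k + 1) <= 2 * c * r) by nra.
  assert (Hk1 : r - 2 < INR k + 1) by lra.
  nra.
Qed.

Theorem mainTheorem16 :
  exists d : G -> G -> R,
    is_metric d /\ proper_metric d /\ left_invariant d /\
    asdim_le d 0 /\ ~ l_asdim_le d 0.
Proof.
  exists dG; split; [exact dG_metric|].
  split; [exact dG_proper|].
  split; [exact dG_left_invariant|].
  split; [exact dG_asdim0 | exact dG_not_l_asdim0].
Qed.
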